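(* Let $G$ be a discrete group. Every proper weight function $\ell$ on $G$ is a slow conditionally negative type function.
   Context: A weight on $G$ is a conditionally negative type function $\ell:G\to[0,\infty)$ (symmetric, $\ell(e)=0$, strictly positive away from $e$) satisfying $\ell(st)\le\ell(s)+\ell(t)$ for all $s,t\in G$. It is proper if $\{g:\ell(g)\le m\}$ is finite for every $m$. A conditionally negative type function is slow if it is proper and for every fixed $g\in G$, $\ell(g^{-1}g')=\ell(g')+o(\ell(g')^{1/2})$ as $g'\to\infty$ (i.e. leaves every finite set). *)

From Stdlib Require Import Reals List.
Open Scope R_scope.

Record Group := {
  carrier :> Type;
  gmul : carrier -> carrier -> carrier;
  ginv : carrier -> carrier;
  gone : carrier;
  gmulA : forall x y z, gmul x (gmul y z) = gmul (gmul x y) z;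
  gmul1l : forall x, gmul gone x = x;
  gmul1r : forall x, gmul x gone = x;
  gmulVl : forall x, gmul (ginv x) x = gone;
  gmulVr : forall x, gmul x (ginv x) = gone
}.

Definition fsum (n : nat) (f : nat -> R) : R :=
  fold_right Rplus 0 (map f (seq 0 n)).

(* conditionally negative type function (with the paper's conventions:
   values in [0,oo), symmetric, vanishing at e, strictly positive away from e) *)
Definition cond_neg_type (G : Group) (l : G -> R) : Prop :=
  (forall g, 0 <= l g) /\
  (forall g, l (ginv G g) = l g) /\
  l (gone G) = 0 /\
  (forall g, g <> gone G -> 0 < l g) /\
  (forall (n : nat) (g : nat -> G) (c : nat -> R),
      fsum n c = 0 ->
      fsum n (fun i => fsum n (fun j => c i * c j * l (gmul G (ginv G (g i)) (g j)))) <= 0).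

Definition weight (G : Group) (l : G -> R) : Prop :=
  cond_neg_type G l /\ (forall s t, l (gmul G s t) <= l s + l t).

Definition finite_set (G : Group) (S : G -> Prop) : Prop :=
  exists L : list G, forall g, S g -> In g L.

Definition proper_fun (G : Group) (l : G -> R) : Prop :=
  forall m : R, finite_set G (fun g => l g <= m).

(* slow: proper, and for each g, l(g^-1 g') - l(g') = o(l(g')^(1/2)) as g'
   leaves every finite set (cofinite filter on G). *)
Definition slow (G : Group) (l : G -> R) : Prop :=
  cond_neg_type G l /\ proper_fun G l /\
  forall g : G, forall eps : R, 0 < eps ->
    exists F : list G, forall g' : G, ~ In g' F ->
      Rabs (l (gmul G (ginv G g) g') - l g') <= eps * sqrt (l g').

From Stdlib Require Import Reals List Lra.
Open Scope R_scope.

(* By symmetry and subadditivity a left translation changes a weight by at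
   most a bounded amount, |l(g^-1 g') - l(g')| <= l(g); properness makes l(g')
   tend to infinity, so this bounded amount is eventually below any multiple
   eps * sqrt (l g'). *)

Lemma gmulKV (G : Group) (g x : G) : gmul G g (gmul G (ginv G g) x) = x.
Proof. rewrite gmulA, gmulVr, gmul1l; reflexivity. Qed.

Section Subadditive.

Variables (G : Group) (l : G -> R).
Hypothesis l_sym : forall g, l (ginv G g) = l g.
Hypothesis l_subadd : forall s t, l (gmul G s t) <= l s + l t.

Lemma Rabs_translate_le (g g' : G) :
  Rabs (l (gmul G (ginv G g) g') - l g') <= l g.
Proof.
  assert (upper : l (gmul G (ginv G g) g') <= l g + l g').
  { rewrite <- (l_sym g); apply l_subadd. }
  assert (lower : l g' <= l g + l (gmul G (ginv G g) g')).
  { rewrite <- (gmulKV G g g') at 1; apply l_subadd. }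
  apply Rabs_le; lra.
Qed.

End Subadditive.

Lemma proper_fun_eventually_gt (G : Group) (l : G -> R) (m : R) :
  proper_fun G l -> exists F : list G, forall g, ~ In g F -> m < l g.
Proof.
  intros l_proper; destruct (l_proper m) as [F HF].
  exists F; intros g g_notin.
  destruct (Rle_lt_dec (l g) m) as [le_lm | lt_ml]; [|exact lt_ml].
  exfalso; exact (g_notin (HF g le_lm)).
Qed.

Lemma le_mul_sqrt (a eps x : R) :
  0 <= a -> 0 < eps -> (a / eps) * (a / eps) <= x -> a <= eps * sqrt x.
Proof.
  intros a_ge0 eps_gt0 sq_le.
  assert (quot_le : a / eps <= sqrt x).
  { rewrite <- (sqrt_square (a / eps)).
    - apply sqrt_le_1_alt; exact sq_le.
    - unfold Rdiv; apply Rmult_le_pos; [exact a_ge0|].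
      left; apply Rinv_0_lt_compat; exact eps_gt0. }
  replace a with (eps * (a / eps)) at 1 by (field; lra).
  apply Rmult_le_compat_l; lra.
Qed.

Theorem lemma5p5 (G : Group) (l : G -> R) :
  weight G l -> proper_fun G l -> slow G l.
Proof.
  intros [l_cnt l_subadd] l_proper.
  split; [exact l_cnt | split; [exact l_proper |]].
  destruct l_cnt as [l_ge0 [l_sym _]].
  intros g eps eps_gt0.
  destruct (proper_fun_eventually_gt G l ((l g / eps) * (l g / eps)) l_proper)
    as [F HF].
  exists F; intros g' g'_notin.
  eapply Rle_trans; [apply (Rabs_translate_le G l l_sym l_subadd) |].
  apply le_mul_sqrt; [apply l_ge0 | exact eps_gt0 |].
  left; apply HF; exact g'_notin.
Qed.
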